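(* Let $m\ge 2$, let $B$ be a blocker in $CK(2m)$, and let $e=[i,j]\in B$ with $0\le i<j\le 2m-1$, so that $j-i-1=2k$ and $2m-(j-i)-1=2l$ with $k,l\ge 0$, $k+l=m-1$. Let $G_1^+$ be the complete convex geometric graph on the vertices $i,i+1,\dots,j$ and $G_2^+$ the one on the vertices $j,j+1,\dots,2m-1,0,1,\dots,i$. Then $B\cap E(G_1^+)$ is a blocker in $G_1^+$ (a blocking set with exactly $k+1$ edges), $B\cap E(G_2^+)$ is a blocker in $G_2^+$ (a blocking set with exactly $l+1$ edges), and no edge of $B$ crosses $e$ in an interior point. Consequently $B$ is crossing-free.
   Context: $CK(2m)$ denotes the complete convex geometric graph whose vertices are the $2m$ vertices of a convex polygon, labelled cyclically $0,1,\dots,2m-1$, and whose edges are all straight segments between pairs of vertices. Two edges with four distinct endpoints cross iff their endpoints alternate in the cyclic order. For a set of $2n$ points in convex position, consider the complete convex geometric graph on them; an SPM is a set of $n$ pairwise disjoint edges (no common endpoint and no crossing), a blocking set is a set of edges containing at least one edge of every SPM, and a blocker is a blocking set of exactly $n$ edges. $E(H)$ denotes the edge set of $H$. *)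

From mathcomp Require Import all_boot.
Set Implicit Arguments. Unset Strict Implicit. Unset Printing Implicit Defensive.

(* Vertices of the convex polygon: 'I_N, labelled cyclically 0..N-1.
   An edge is represented canonically as a pair (a, b) with a < b. *)
Definition edge N := ('I_N * 'I_N)%type.

(* Edge set of the complete convex geometric graph on the vertex subset V
   (points of V are in convex position with the inherited cyclic order). *)
Definition E_of N (V : {set 'I_N}) : {set edge N} :=
  [set p : edge N | (p.1 < p.2) && (p.1 \in V) && (p.2 \in V)].

(* Two edges with four distinct endpoints cross iff their endpoints alternate
   in the cyclic order; for canonical pairs a<b, c<d this is
   a<c<b<d or c<a<d<b (which already forces the four endpoints distinct). *)
Definition cross N (e f : edge N) : bool :=
  ((e.1 < f.1) && (f.1 < e.2) && (e.2 < f.2)) ||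
  ((f.1 < e.1) && (e.1 < f.2) && (f.2 < e.2)).

Definition share_endpoint N (e f : edge N) : bool :=
  (e.1 == f.1) || (e.1 == f.2) || (e.2 == f.1) || (e.2 == f.2).

Definition disjoint_edges N (e f : edge N) : bool :=
  ~~ share_endpoint e f && ~~ cross e f.

Definition SPM N (V : {set 'I_N}) (M : {set edge N}) : bool :=
  (M \subset E_of V) && (#|M| * 2 == #|V|) &&
  [forall e in M, forall f in M, (e != f) ==> disjoint_edges e f].

Definition blocking_set N (V : {set 'I_N}) (B : {set edge N}) : Prop :=
  B \subset E_of V /\
  forall M : {set edge N}, SPM V M -> exists2 e, e \in B & e \in M.

Definition blocker N (V : {set 'I_N}) (B : {set edge N}) : Prop :=
  blocking_set V B /\ #|B| * 2 = #|V|.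

From mathcomp Require Import all_boot all_order zify.
Set Implicit Arguments. Unset Strict Implicit. Unset Printing Implicit Defensive.
Import Order.TTheory.

(* For N even, each odd residue c gives an SPM of CK(N): the "parallel class" of all
   edges [a, b] with a + b = c (mod N). These N/2 classes are pairwise disjoint, so a
   blocking set has at least N/2 edges, and a blocker has exactly one edge in each odd
   class and no other edge. Enumerating a vertex set V in increasing order carries the
   bound |V|/2 over to blocking sets of any convex subpolygon V.
   Let [i, j] be an edge of a blocker B. Its class is symmetric about the axis of [i, j],
   so the edges of this class not lying on one side of [i, j] are disjoint from all
   edges of that side. An SPM of one side avoiding B would thus extend, by those
   edges, to an SPM of CK(N) meeting B only in the class of [i, j], i.e. in [i, j]
   itself, which lies on that side: a contradiction. Hence B restricted to either side
   is a blocking set of it, of size at least half the side. The two sides have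
   |V1| + |V2| = N + 2 vertices and share only the edge [i, j], so both bounds are
   tight and every edge of B lies on one side of [i, j]. *)

Section PerfectMatchings.
Variable N : nat.
Implicit Types (V : {set 'I_N}) (M : {set edge N}) (p q : edge N).

Definition matching M :=
  [forall p in M, forall q in M, (p != q) ==> disjoint_edges p q].

Definition ends M : {set 'I_N} := (fst @: M) :|: (snd @: M).

Lemma matchingP M :
  reflect {in M &, forall p q, p != q -> disjoint_edges p q} (matching M).
Proof.
apply: (iffP forall_inP) => [H p q pM qM | H p pM].
  by move: (H p pM) => /forall_inP/(_ q qM)/implyP.
by apply/forall_inP => q qM; apply/implyP; apply: H.
Qed.

Lemma E_ofP V p :
  reflect [/\ p.1 < p.2, p.1 \in V & p.2 \in V] (p \in E_of V).
Proof. by rewrite inE -andbA; apply: and3P. Qed.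

Lemma SPME V M :
  SPM V M = [&& M \subset E_of V, #|M| * 2 == #|V| & matching M].
Proof. by rewrite /SPM -andbA. Qed.

Lemma SPM_sub V M : SPM V M -> M \subset E_of V.
Proof. by rewrite SPME => /and3P []. Qed.

Lemma SPM_matching V M : SPM V M -> matching M.
Proof. by rewrite SPME => /and3P []. Qed.

Lemma endsP M x :
  reflect (exists2 p, p \in M & x = p.1 \/ x = p.2) (x \in ends M).
Proof.
rewrite inE; apply: (iffP orP) => [[] /imsetP [p pM ->] | [p pM [->|->]]].
- by exists p; [|left].
- by exists p; [|right].
- by left; apply/imsetP; exists p.
- by right; apply/imsetP; exists p.
Qed.

Lemma ends_sub V M : M \subset E_of V -> ends M \subset V.
Proof.
move=> /subsetP MV; apply/subsetP => x /endsP [p /MV /E_ofP [_ p1V p2V]].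
by case=> ->.
Qed.

Lemma card_ends V M :
  M \subset E_of V -> matching M -> #|ends M| = #|M| * 2.
Proof.
move=> /subsetP MV /matchingP Mm.
have nshare p q : p \in M -> q \in M -> p != q -> ~~ share_endpoint p q.
  by move=> pM qM /(Mm p q pM qM) /andP [].
have fst_inj : {in M &, injective fst}.
  move=> p q pM qM e; apply/eqP; apply: contraT => /(nshare p q pM qM).
  by rewrite /share_endpoint e eqxx.
have snd_inj : {in M &, injective snd}.
  move=> p q pM qM e; apply/eqP; apply: contraT => /(nshare p q pM qM).
  by rewrite /share_endpoint e eqxx !orbT.
have lt_ends p : p \in M -> p.1 < p.2 by move=> /MV /E_ofP [].
rewrite /ends cardsU (card_in_imset fst_inj) (card_in_imset snd_inj).
suff -> : [set p.1 | p in M] :&: [set p.2 | p in M] = set0.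
  by rewrite cards0 subn0 muln2 addnn.
apply/setP => x; rewrite !inE; apply/negP => /andP [/imsetP [p pM ->] /imsetP [q qM e]].
have [pq | npq] := eqVneq p q.
  by move: (lt_ends q qM); rewrite -e pq ltnn.
by move: (nshare p q pM qM npq); rewrite /share_endpoint e eqxx !orbT.
Qed.

Lemma SPM_ends V M : SPM V M -> ends M = V.
Proof.
rewrite SPME => /and3P [MV /eqP cardM Mm]; apply/eqP.
by rewrite eqEcard ends_sub //= (card_ends MV Mm) cardM.
Qed.

Lemma SPM_of_ends V M :
  M \subset E_of V -> V \subset ends M -> matching M -> SPM V M.
Proof.
move=> MV Vends Mm; have endsV : ends M = V by apply/eqP; rewrite eqEsubset ends_sub.
by rewrite SPME MV Mm -endsV (card_ends MV Mm) eqxx.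
Qed.

End PerfectMatchings.

Section Disjointness.
Variable N : nat.
Implicit Types (p q : edge N).

Lemma disjoint_edgesC p q : disjoint_edges p q = disjoint_edges q p.
Proof.
rewrite /disjoint_edges /share_endpoint /cross -!(inj_eq (@ord_inj _)).
by apply/idP/idP => /andP [h1 h2]; apply/andP; split; lia.
Qed.

Lemma disjoint_edges_apart (a b : nat) p q :
  a <= p.1 <= b -> a <= p.2 <= b ->
  ~~ (a <= q.1 <= b) -> ~~ (a <= q.2 <= b) -> disjoint_edges p q.
Proof.
rewrite /disjoint_edges /share_endpoint /cross -!(inj_eq (@ord_inj _)) => *.
by apply/andP; split; lia.
Qed.

End Disjointness.

Section ParallelClasses.
Variable N : nat.
Implicit Types (p q : edge N) (c : 'I_N).

Lemma ord_gt0 (x : 'I_N) : 0 < N.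
Proof. exact: leq_ltn_trans (leq0n x) (ltn_ord x). Qed.

Definition edge_class p : 'I_N := Ordinal (ltn_pmod (p.1 + p.2) (ord_gt0 p.1)).

Definition parallel_class c : {set edge N} :=
  [set p : edge N | (p.1 < p.2) && (edge_class p == c)].

Lemma modnDl_inj x y z : y < N -> z < N -> (x + y) %% N = (x + z) %% N -> y = z.
Proof. by move=> yN zN /eqP; rewrite eqn_modDl !modn_small // => /eqP. Qed.

Lemma eq_modn_close u v : u %% N = v %% N -> u < v + N -> v < u + N -> u = v.
Proof.
wlog uv : u v / u <= v.
  move=> hyp E uvN vuN; case: (leqP u v) => [|/ltnW] le; first exact: hyp.
  by symmetry; apply: hyp.
move=> E _ vuN; suff : v - u = 0 by lia.
by apply: (@modnDl_inj u); [lia | lia | rewrite addn0 subnKC].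
Qed.

Lemma parallel_class_matching c : matching (parallel_class c).
Proof.
apply/matchingP => [[a b] [x y]]; rewrite !inE /=.
move=> /andP [ab /eqP abc] /andP [xy /eqP xyc].
rewrite xpair_eqE -!(inj_eq (@ord_inj _)) => ne.
(* A shared endpoint or a crossing would make the two sums differ by less than N. *)
have /eq_modn_close close : (a + b) %% N = (x + y) %% N :=
  congr1 val (etrans abc (esym xyc)).
have := ltn_ord a; have := ltn_ord b; have := ltn_ord x; have := ltn_ord y => *.
rewrite /disjoint_edges /share_endpoint /cross /= -!(inj_eq (@ord_inj _)).
apply/andP; split; lia.
Qed.

Lemma parallel_partner c (x : 'I_N) : ~~ odd N -> odd c ->
  exists2 y : 'I_N, y != x & (x + y) %% N = c.
Proof.
move=> evenN oddc; have xN := ltn_ord x.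
have sum_c : (x + (c + N - x) %% N) %% N = c.
  by rewrite modnDmr subnKC ?modnDr ?modn_small //; lia.
exists (Ordinal (ltn_pmod (c + N - x) (ord_gt0 x))) => //=.
apply: contraTneq oddc => /(congr1 val) /= yx.
by rewrite -sum_c yx addnn odd_mod ?(negbTE evenN) // odd_double.
Qed.

Lemma parallel_class_SPM c : ~~ odd N -> odd c -> SPM [set: 'I_N] (parallel_class c).
Proof.
move=> evenN oddc; apply: SPM_of_ends (parallel_class_matching c).
  by apply/subsetP => p; rewrite !inE => /andP [-> _].
have in_class (a b : 'I_N) : a < b -> (a + b) %% N = c -> (a, b) \in parallel_class c.
  by move=> ab abc; rewrite inE ab -(inj_eq (@ord_inj _)) /= abc.
apply/subsetP => x _; have [y yx xyc] := parallel_partner x evenN oddc.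
apply/endsP; case: (ltngtP x y) => [xy | yx' | /ord_inj xy]; last by rewrite xy eqxx in yx.
- by exists (x, y); [apply: in_class | left].
- by exists (y, x); [apply: in_class; rewrite // addnC | right].
Qed.

Lemma edge_class_interval (a b : nat) p : b < N -> edge_class p = (a + b) %% N :> nat ->
  (a <= p.1 <= b) = (a <= p.2 <= b).
Proof.
move=> bN /= /eq_modn_close close; have p1N := ltn_ord p.1; have p2N := ltn_ord p.2.
have sum_ab : (a <= p.1 <= b) || (a <= p.2 <= b) -> p.1 + p.2 = a + b.
  by move=> in_ab; apply: close; lia.
by have [/sum_ab | ] := boolP ((a <= p.1 <= b) || (a <= p.2 <= b)); lia.
Qed.

End ParallelClasses.

Arguments edge_class {N} p.

Section Counting.
Variable N : nat.

Lemma card_ord_count (P : pred nat) : #|[set x : 'I_N | P x]| = count P (iota 0 N).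
Proof.
rewrite cardsE cardE /enum_mem -enumT size_filter -val_enum_ord count_map.
exact: eq_count.
Qed.

Lemma count_odd_iota n : count odd (iota 0 n) = n./2.
Proof.
elim: n => // n IHn; rewrite -addn1 iotaD count_cat IHn /= addn0 addn1.
by rewrite /= uphalf_half addnC.
Qed.

Lemma count_interval_iota i j n :
  count (fun x => i <= x <= j) (iota 0 n) = minn n j.+1 - i.
Proof.
elim: n => [|n IHn]; first by rewrite min0n.
by rewrite -addn1 iotaD count_cat IHn /= addn0; lia.
Qed.

Lemma card_odd_ord : #|[set c : 'I_N | odd c]| = N./2.
Proof. by rewrite card_ord_count count_odd_iota. Qed.

End Counting.

Section BlockersOfTheWholePolygon.
Variables (N : nat) (B : {set edge N}).
Hypothesis evenN : ~~ odd N.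

Lemma odd_classes_sub_blocking :
  blocking_set [set: 'I_N] B -> [set c : 'I_N | odd c] \subset edge_class @: B.
Proof.
move=> [_ blockB]; apply/subsetP => c; rewrite inE => oddc.
have [e eB] := blockB _ (parallel_class_SPM evenN oddc).
by rewrite inE => /andP [_ /eqP <-]; apply: imset_f.
Qed.

Lemma blocking_set_card_full : blocking_set [set: 'I_N] B -> N./2 <= #|B|.
Proof.
move=> /odd_classes_sub_blocking /subset_leq_card; rewrite card_odd_ord => le.
exact: leq_trans le (leq_imset_card _ _).
Qed.

Lemma blocker_classes : blocker [set: 'I_N] B ->
  edge_class @: B = [set c : 'I_N | odd c] /\ {in B &, injective edge_class}.
Proof.
move=> [blockB]; rewrite cardsT card_ord => cardB.
have halfN : #|B| = N./2 by rewrite -[X in X./2]cardB muln2 doubleK.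
have sub := odd_classes_sub_blocking blockB.
have le_img : #|B| <= #|edge_class @: B| by rewrite halfN -card_odd_ord subset_leq_card.
split; first by apply/esym/eqP; rewrite eqEcard sub card_odd_ord -halfN leq_imset_card.
by apply/imset_injP; rewrite eqn_leq leq_imset_card le_img.
Qed.

End BlockersOfTheWholePolygon.

Section SubPolygons.
Variables (N : nat) (V : {set 'I_N}).
Implicit Types (p q : edge #|V|) (M : {set edge #|V|}).

(* Identifies the complete convex graph on [V] with CK(#|V|). *)
Definition lift_vertex : 'I_#|V| -> 'I_N := @Order.enum_val _ _ (mem V).

Definition lift_edge p : edge N := (lift_vertex p.1, lift_vertex p.2).

Lemma ltn_lift_vertex : {mono lift_vertex : x y / x < y}.
Proof.
move=> x y; have := leW_mono (Order.le_enum_val (@le_total _ 'I_N) (A := mem V)).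
by move/(_ x y); rewrite !ltEord.
Qed.

Lemma lift_vertexP x : lift_vertex x \in V.
Proof. exact: Order.enum_valP. Qed.

Lemma lift_vertex_inj : injective lift_vertex.
Proof. exact: Order.enum_val_inj. Qed.

Lemma lift_edge_inj : injective lift_edge.
Proof. by move=> [a b] [c d] [/lift_vertex_inj -> /lift_vertex_inj ->]. Qed.

Lemma disjoint_lift_edge p q :
  disjoint_edges (lift_edge p) (lift_edge q) = disjoint_edges p q.
Proof.
rewrite /disjoint_edges /share_endpoint /cross /=.
by rewrite !(inj_eq lift_vertex_inj) !ltn_lift_vertex.
Qed.

Lemma lift_edge_SPM M : SPM [set: 'I_#|V|] M -> SPM V (lift_edge @: M).
Proof.
rewrite !SPME => /and3P [/subsetP ME /eqP cardM /matchingP Mm]; apply/and3P; split.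
- apply/subsetP => _ /imsetP [p /ME /E_ofP [lt_p _ _] ->].
  by apply/E_ofP; rewrite /= ltn_lift_vertex !lift_vertexP.
- by rewrite (card_imset _ lift_edge_inj) cardM cardsT card_ord.
- apply/matchingP => _ _ /imsetP [p pM ->] /imsetP [q qM ->] ne.
  by rewrite disjoint_lift_edge Mm //; apply: contraNneq ne => ->.
Qed.

Lemma blocking_set_card B : ~~ odd #|V| -> blocking_set V B -> #|V|./2 <= #|B|.
Proof.
move=> evenV [BE blockB].
have blockB0 : blocking_set [set: 'I_#|V|] (lift_edge @^-1: B).
  split.
    apply/subsetP => p; rewrite inE => /(subsetP BE) /E_ofP [lt_p _ _].
    by apply/E_ofP; rewrite !inE -ltn_lift_vertex.
  move=> M /lift_edge_SPM /blockB [e eB /imsetP [p pM ep]].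
  by exists p; rewrite // inE -ep.
apply: leq_trans (blocking_set_card_full evenV blockB0) _.
rewrite -(card_imset _ lift_edge_inj); apply/subset_leq_card/subsetP.
by move=> e /imsetP [p]; rewrite inE => pB ->.
Qed.

End SubPolygons.

Lemma SPM_patch N (V : {set 'I_N}) (M M0 : {set edge N}) :
  SPM V M -> SPM [set: 'I_N] M0 ->
  {in M0 :\: E_of V & E_of V, forall p q, disjoint_edges p q} ->
  SPM [set: 'I_N] (M :|: (M0 :\: E_of V)).
Proof.
move=> SPM_M SPM_M0 apart.
have /subsetP ME := SPM_sub SPM_M; have /matchingP Mm := SPM_matching SPM_M.
have /subsetP M0E := SPM_sub SPM_M0; have /matchingP M0m := SPM_matching SPM_M0.
apply: SPM_of_ends.
- apply/subsetP => p; rewrite !inE => /orP [/ME | /andP [_ /M0E]] /E_ofP [lt_p _ _];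
    by rewrite lt_p.
- apply/subsetP => x _; have [xV | xNV] := boolP (x \in V).
    move: xV; rewrite -(SPM_ends SPM_M) => /endsP [p pM xp].
    by apply/endsP; exists p; rewrite // inE pM.
  have := in_setT x; rewrite -(SPM_ends SPM_M0) => /endsP [p pM0 xp].
  apply/endsP; exists p => //; rewrite in_setU in_setD pM0 andbT; apply/orP; right.
  by apply: contra xNV => /E_ofP [_ p1V p2V]; case: xp => ->.
- apply/matchingP => p q; rewrite !in_setU.
  move=> /orP [pM | pM0] /orP [qM | qM0] pq.
  + exact: Mm.
  + by rewrite disjoint_edgesC apart // ME.
  + by rewrite apart // ME.
  + by apply: M0m => //; [move: pM0 | move: qM0]; rewrite inE => /andP [].
Qed.

Lemma tight_cover (T : finType) (A A1 A2 : {set T}) (n1 n2 : nat) :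
  A1 :|: A2 \subset A -> #|A1 :&: A2| <= 1 ->
  n1 <= #|A1| -> n2 <= #|A2| -> n1 + n2 = #|A| + 1 ->
  [/\ #|A1| = n1, #|A2| = n2 & A1 :|: A2 = A].
Proof.
move=> sub_A card_I le1 le2 sum_n; have card_U := subset_leq_card sub_A.
have UI := cardsUI A1 A2.
have eq_U : #|A1 :|: A2| = #|A| by lia.
split; [lia | lia |].
by apply/eqP; rewrite eqEcard sub_A eq_U leqnn.
Qed.

Definition arc N (i j : nat) : {set 'I_N} := [set x : 'I_N | i <= x <= j].
Definition coarc N (i j : nat) : {set 'I_N} := [set x : 'I_N | (j <= x) || (x <= i)].

Lemma card_arc N (i j : 'I_N) : #|arc N i j| = j.+1 - i.
Proof.
rewrite /arc (card_ord_count N (fun x => i <= x <= j)) count_interval_iota; congr (_ - _).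
by apply/minn_idPr; apply: ltn_ord.
Qed.

Lemma card_arc_coarc N (i j : 'I_N) : i < j -> #|arc N i j| + #|coarc N i j| = N + 2.
Proof.
move=> ij; rewrite -cardsUI.
have -> : arc N i j :|: coarc N i j = [set: 'I_N].
  by apply/setP => x; rewrite !inE; lia.
have -> : arc N i j :&: coarc N i j = [set i; j].
  by apply/setP => x; rewrite !inE -!(inj_eq (@ord_inj _)); lia.
by rewrite cardsT card_ord cards2 -(inj_eq (@ord_inj _)) (ltn_eqF ij).
Qed.

Section BlockerThroughAnEdge.
Variables (N : nat) (B : {set edge N}) (i j : 'I_N).
Hypotheses (evenN : ~~ odd N) (blockerB : blocker [set: 'I_N] B) (ijB : (i, j) \in B).

Lemma blocker_edge_lt : i < j.
Proof. by have [[/subsetP BE _] _] := blockerB; have /E_ofP [] := BE _ ijB. Qed.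

Lemma blocker_edge_class_odd : odd (edge_class (i, j)).
Proof.
have [img _] := blocker_classes evenN blockerB.
by have := imset_f edge_class ijB; rewrite img inE.
Qed.

Lemma blocker_edge_odd : odd (i + j).
Proof. by have := blocker_edge_class_odd; rewrite /= odd_mod ?(negbTE evenN). Qed.

Lemma blocking_restrict (V : {set 'I_N}) : (i, j) \in E_of V ->
  {in parallel_class (edge_class (i, j)) :\: E_of V & E_of V,
    forall p q, disjoint_edges p q} ->
  blocking_set V (B :&: E_of V).
Proof.
move=> ijV apart; split; first exact: subsetIr.
have [[_ blockB] _] := blockerB; have [_ inj_class] := blocker_classes evenN blockerB.
move=> M SPM_M; have MV := SPM_sub SPM_M.
have SPM_class := parallel_class_SPM evenN blocker_edge_class_odd.
have [e eB] := blockB _ (SPM_patch SPM_M SPM_class apart).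
rewrite in_setU in_setD => /orP [eM | /andP [eV]].
  by exists e; rewrite // inE eB (subsetP MV).
rewrite inE => /andP [_ /eqP class_e].
by move: eV; rewrite (inj_class _ _ eB ijB class_e) ijV.
Qed.

Lemma arc_apart :
  {in parallel_class (edge_class (i, j)) :\: E_of (arc N i j) & E_of (arc N i j),
    forall p q, disjoint_edges p q}.
Proof.
move=> p q; rewrite !inE => /andP [out_p /andP [lt_p /eqP class_p]] /andP [/andP [_ q1] q2].
have sides := edge_class_interval (a := i) (ltn_ord j) (congr1 val class_p).
rewrite disjoint_edgesC; apply: (disjoint_edges_apart (a := i) (b := j)) => //; lia.
Qed.

Lemma coarc_apart :
  {in parallel_class (edge_class (i, j)) :\: E_of (coarc N i j) & E_of (coarc N i j),
    forall p q, disjoint_edges p q}.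
Proof.
move=> p q; rewrite !inE => /andP [out_p /andP [lt_p /eqP class_p]] /andP [/andP [_ q1] q2].
have ij := blocker_edge_lt.
have sum_ij : i.+1 + j.-1 = i + j by lia.
have sides := edge_class_interval (a := i.+1) (leq_ltn_trans (leq_pred j) (ltn_ord j))
  (etrans (congr1 val class_p) (congr1 (modn^~ N) (esym sum_ij))).
apply: (disjoint_edges_apart (a := i.+1) (b := j.-1)); lia.
Qed.

Lemma even_arc : ~~ odd #|arc N i j|.
Proof.
have := blocker_edge_odd; rewrite card_arc oddB ?oddS; last by have := blocker_edge_lt; lia.
by rewrite oddD; case: (odd i); case: (odd j).
Qed.

Lemma even_coarc : ~~ odd #|coarc N i j|.
Proof.
have := congr1 odd (card_arc_coarc blocker_edge_lt).
by rewrite !oddD (negbTE even_arc) (negbTE evenN) /= => ->.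
Qed.

Lemma blocker_sides :
  [/\ blocker (arc N i j) (B :&: E_of (arc N i j)),
      blocker (coarc N i j) (B :&: E_of (coarc N i j))
    & {in B, forall f, ~~ cross (i, j) f}].
Proof.
have ij := blocker_edge_lt; have [blockB cardB] := blockerB.
rewrite cardsT card_ord in cardB.
have ij_arc : (i, j) \in E_of (arc N i j).
  by apply/E_ofP; rewrite /arc !inE /=; split; lia.
have ij_coarc : (i, j) \in E_of (coarc N i j).
  by apply/E_ofP; rewrite /coarc !inE /=; split; lia.
have block_arc := blocking_restrict ij_arc arc_apart.
have block_coarc := blocking_restrict ij_coarc coarc_apart.
have le1 := blocking_set_card even_arc block_arc.
have le2 := blocking_set_card even_coarc block_coarc.
have shared : B :&: E_of (arc N i j) :&: (B :&: E_of (coarc N i j)) \subset [set (i, j)].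
  apply/subsetP => -[a b]; rewrite /arc /coarc !inE xpair_eqE /=.
  by rewrite -!(inj_eq (@ord_inj _)); lia.
have halves : #|arc N i j|./2 + #|coarc N i j|./2 = #|B| + 1.
  have := card_arc_coarc ij; have := halfK #|arc N i j|; have := halfK #|coarc N i j|.
  rewrite (negbTE even_arc) (negbTE even_coarc) !subn0; lia.
have sub : B :&: E_of (arc N i j) :|: B :&: E_of (coarc N i j) \subset B.
  by rewrite subUset !subsetIl.
have le_shared := leq_trans (subset_leq_card shared) (eq_leq (cards1 (i, j))).
have [card1 card2 cover] := tight_cover sub le_shared le1 le2 halves.
split.
- by split; last by rewrite card1 muln2 halfK (negbTE even_arc) subn0.
- by split; last by rewrite card2 muln2 halfK (negbTE even_coarc) subn0.
move=> f; rewrite -cover /arc /coarc !inE /cross /= => /orP [] /andP [_]; lia.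
Qed.

End BlockerThroughAnEdge.

Theorem mainTheorem11 (m : nat) (hm : 2 <= m)
  (B : {set edge (2 * m)}) (i j : 'I_(2 * m)) :
  blocker [set: 'I_(2 * m)] B -> (i, j) \in B ->
  let V1 := [set x : 'I_(2 * m) | (i <= x) && (x <= j)] in
  let V2 := [set x : 'I_(2 * m) | (j <= x) || (x <= i)] in
  [/\ blocker V1 (B :&: E_of V1),
      blocker V2 (B :&: E_of V2),
      (forall f, f \in B -> ~~ cross (i, j) f)
    & (forall e f, e \in B -> f \in B -> ~~ cross e f)].
Proof.
move=> blockerB ijB V1 V2; have evenN : ~~ odd (2 * m) by rewrite oddM.
have [arc_blocker coarc_blocker ij_uncrossed] := blocker_sides evenN blockerB ijB.
split=> // -[a b] f abB.
by have [_ _ ab_uncrossed] := blocker_sides evenN blockerB abB; apply: ab_uncrossed.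
Qed.
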